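(* Let $X=\{x,y,z\}$ and $U=\{u,v,w\}$ be distinct three-element subsets of $\Sigma^+$ such that $X^*$ and $U^*$ are $3$-maximal, $Z=X\cup U$, and let $g,h:A^*\to\Sigma^*$ (with $A=\{\mathbf a,\mathbf b,\mathbf c\}$) be the morphisms $g(\mathbf a)=x,g(\mathbf b)=y,g(\mathbf c)=z$, $h(\mathbf a)=u,h(\mathbf b)=v,h(\mathbf c)=w$. Assume that $g$ is $Z$-marked. If $(\mathbf r,\mathbf s)$ and $(\mathbf r',\mathbf s')$ are two distinct minimal solutions of $C(g,h)$, then, with $\mathbf u=\mathbf r\wedge\mathbf r'$ and $\mathbf v=\mathbf s\wedge\mathbf s'$, there is a word $o$ with $g(\mathbf u)=h(\mathbf v)o$ which is a critical overflow on $(\mathbf u,\mathbf v)$. Moreover, $h$ is $Z$-marked if and only if $o$ is the empty word.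
   Context: $\Sigma^*$ is the free monoid over a countable alphabet $\Sigma$. A submonoid of rank (cardinality of minimal generating set) at most $k$ is $k$-maximal if it is not properly contained in any submonoid of $\Sigma^*$ of rank at most $k$. $\mathbf p\wedge\mathbf q$ denotes the longest common prefix of two words. The free hull of $Z$ is the smallest free submonoid of $\Sigma^*$ containing $Z$, with basis $\mathrm{FB}(Z)$; for $w$ in it, $w=b_1\cdots b_n$ uniquely with $b_i\in\mathrm{FB}(Z)$ and $\mathrm{first}_Z(w)=b_1$. A morphism $f:A^*\to\Sigma^*$ with images in the free hull is $Z$-marked if $\mathrm{first}_Z(f(\mathbf a_1))\neq\mathrm{first}_Z(f(\mathbf a_2))$ for distinct letters $\mathbf a_1,\mathbf a_2$. $C(g,h)=\{(\mathbf r,\mathbf s)\in A^+\times A^+: g(\mathbf r)=h(\mathbf s)\}$; a solution $(\mathbf r,\mathbf s)$ is minimal if there is no solution $(\mathbf p,\mathbf q)$ with $\mathbf p$ a proper prefix of $\mathbf r$ and $\mathbf q$ a proper prefix of $\mathbf s$. For a word $\mathbf t$, $\mathrm{first}(\mathbf t)$ is its first letter. A word $o\in\Sigma^*$ is a critical overflow on $(\mathbf u,\mathbf v)\in A^*\times A^*$ if $g(\mathbf u)=h(\mathbf v)o$ and there exist $\mathbf u_1,\mathbf u_2,\mathbf v_1,\mathbf v_2\in A^*$ with $\mathrm{first}(\mathbf u_1)\neq\mathrm{first}(\mathbf u_2)$, $\mathrm{first}(\mathbf v_1)\neq\mathrm{first}(\mathbf v_2)$, $g(\mathbf u\mathbf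 u_1)=h(\mathbf v\mathbf v_1)$ and $g(\mathbf u\mathbf u_2)=h(\mathbf v\mathbf v_2)$. *)

From mathcomp Require Import all_boot.
Set Implicit Arguments. Unset Strict Implicit. Unset Printing Implicit Defensive.

Section Words.
Variable S : eqType.

Definition gen (G : seq (seq S)) (w : seq S) : Prop :=
  exists ws : seq (seq S), all (fun t => t \in G) ws /\ flatten ws = w.

Definition rank_le (k : nat) (M : seq S -> Prop) : Prop :=
  exists G : seq (seq S), size G <= k /\ forall w, M w <-> gen G w.

Definition k_maximal (k : nat) (M : seq S -> Prop) : Prop :=
  rank_le k M /\
  forall G : seq (seq S), size G <= k ->
    (forall w, M w -> gen G w) -> (forall w, gen G w -> M w).

Definition submonoid (M : seq S -> Prop) : Prop :=
  M [::] /\ forall u v, M u -> M v -> M (u ++ v).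

Definition basis (M : seq S -> Prop) (w : seq S) : Prop :=
  M w /\ w <> [::] /\
  forall u v, M u -> M v -> u ++ v = w -> u = [::] \/ v = [::].

Definition free_submonoid (M : seq S -> Prop) : Prop :=
  submonoid M /\
  forall ws1 ws2 : seq (seq S),
    (forall t, t \in ws1 -> basis M t) -> (forall t, t \in ws2 -> basis M t) ->
    flatten ws1 = flatten ws2 -> ws1 = ws2.

Definition free_hull (Z : seq S -> Prop) (w : seq S) : Prop :=
  forall M, free_submonoid M -> (forall z, Z z -> M z) -> M w.

Definition FB (Z : seq S -> Prop) : seq S -> Prop := basis (free_hull Z).

Definition is_first (Z : seq S -> Prop) (w b : seq S) : Prop :=
  exists ws : seq (seq S),
    FB Z b /\ (forall t, t \in ws -> FB Z t) /\ flatten (b :: ws) = w.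

End Words.

Definition morph (A : Type) (S : Type) (f : A -> seq S) (r : seq A) : seq S :=
  flatten (map f r).

Definition marked (A : eqType) (S : eqType) (Z : seq S -> Prop)
  (f : A -> seq S) : Prop :=
  (forall a, free_hull Z (f a)) /\
  forall a1 a2 : A, a1 != a2 -> forall b1 b2,
    is_first Z (f a1) b1 -> is_first Z (f a2) b2 -> b1 <> b2.

Definition solution (A : Type) (S : Type) (g h : A -> seq S) (r s : seq A) :=
  r <> [::] /\ s <> [::] /\ morph g r = morph h s.

Definition proper_prefix (A : eqType) (p r : seq A) : bool :=
  prefix p r && (size p < size r).

Definition minimal_solution (A : eqType) (S : Type) (g h : A -> seq S)
  (r s : seq A) : Prop :=
  solution g h r s /\
  ~ (exists p q, proper_prefix p r /\ proper_prefix q s /\ solution g h p q).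

Fixpoint lcp (A : eqType) (u v : seq A) : seq A :=
  match u, v with
  | x :: u', y :: v' => if x == y then x :: lcp u' v' else [::]
  | _, _ => [::]
  end.

Definition first (A : Type) (t : seq A) : option A := ohead t.

Definition critical_overflow (A : eqType) (S : Type) (g h : A -> seq S)
  (o : seq S) (u v : seq A) : Prop :=
  morph g u = morph h v ++ o /\
  exists u1 u2 v1 v2 : seq A,
    first u1 <> first u2 /\ first v1 <> first v2 /\
    morph g (u ++ u1) = morph h (v ++ v1) /\
    morph g (u ++ u2) = morph h (v ++ v2).

From mathcomp Require Import all_boot.
From Stdlib Require Import Classical.
Set Implicit Arguments. Unset Strict Implicit. Unset Printing Implicit Defensive.

(* If h were not
      marked, a pigeonhole argument on three letters would make FB(Z)
      consist of the first_Z's of g only; 3-maximality then puts these words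
      in X and in U, and markedness of g identifies them with X, so X = U. *)

Section Words.
Variable T : Type.

Lemma cat_cancel_l (x y z : seq T) : x ++ y = x ++ z -> y = z.
Proof. by elim: x => //= a x IH [] /IH. Qed.

Lemma cat_split (x y x' y' : seq T) : x ++ y = x' ++ y' ->
  (exists t, x' = x ++ t /\ y = t ++ y') \/ (exists t, x = x' ++ t /\ y' = t ++ y).
Proof.
elim: x x' => [|a x IH] x' /=; first by move=> ->; left; exists x'.
case: x' => [|b x'] /=; first by move=> <-; right; exists (a :: x).
by case=> -> /IH [[t [-> ->]]|[t [-> ->]]]; [left|right]; exists t.
Qed.

End Words.

Lemma morph_cat (A S : Type) (f : A -> seq S) (r r' : seq A) :
  morph f (r ++ r') = morph f r ++ morph f r'.
Proof. by rewrite /morph map_cat flatten_cat. Qed.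

Lemma morph_nil (A S : Type) (f : A -> seq S) (r : seq A) :
  (forall a, f a <> [::]) -> morph f r = [::] -> r = [::].
Proof. by case: r => // a r fn; rewrite /morph /=; case: (f a) (fn a). Qed.

(* The two remainders after the longest common prefix: they start with
   different letters, unless both words coincide. *)
Definition branching (A : Type) (x1 x2 : seq A) : Prop :=
  first x1 <> first x2 \/ (x1 = [::] /\ x2 = [::]).

Lemma lcp_split (A : eqType) (r r' : seq A) : exists r1 r1',
  [/\ r = lcp r r' ++ r1, r' = lcp r r' ++ r1' & branching r1 r1'].
Proof.
elim: r r' => [|a r IH] [|a' r'] /=.
- by exists [::], [::]; split=> //; right.
- by exists [::], (a' :: r'); split=> //; left.
- by exists (a :: r), [::]; split=> //; left.
case: eqP => [<-|ne]; last by exists (a :: r), (a' :: r'); split=> //; left=> [[]].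
by have [r1 [r1' [e1 e2 D]]] := IH r'; exists r1, r1'; rewrite /= -e1 -e2.
Qed.

Lemma lcp_nil_heads (A : eqType) (a a' : A) (r r' : seq A) :
  lcp (a :: r) (a' :: r') = [::] -> a != a'.
Proof. by rewrite /=; case: eqP. Qed.

Section FreeSubmonoids.
Variable S : eqType.
Implicit Types (u v w : seq S) (M : seq S -> Prop).

(* The stability condition, which characterises free submonoids. *)
Definition stable M := forall u v w, M u -> M (u ++ v) -> M w -> M (v ++ w) -> M v.

Lemma submonoid_flatten M ws :
  submonoid M -> (forall t, t \in ws -> M t) -> M (flatten ws).
Proof.
move=> [M0 MC]; elim: ws => //= t ws IH Mws.
apply: MC; first by apply: Mws; rewrite mem_head.
by apply: IH => z z_ws; apply: Mws; rewrite inE z_ws orbT.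
Qed.

Lemma factor_exists M w : submonoid M -> M w ->
  exists ws, (forall t, t \in ws -> basis M t) /\ flatten ws = w.
Proof.
move=> sM; elim: {w}(size w) {-2}w (leqnn (size w)) => [|n IH] w.
  by rewrite leqn0 => /nilP -> _; exists [::].
move=> w_size Mw; case: (classic (basis M w)) => [Bw|nBw].
  by exists [:: w]; split=> [t /[!inE] /eqP ->|]; rewrite /= ?cats0.
case: (classic (w = [::])) => [->|w_ne]; first by exists [::].
have [u [v [Mu Mv uv [u_ne v_ne]]]] :
    exists u v, [/\ M u, M v, u ++ v = w & u <> [::] /\ v <> [::]].
  apply: NNPP => no_split; apply: nBw; do 2!split=> //.
  move=> u v Mu Mv uv; apply: NNPP => /not_or_and [u_ne v_ne].
  by apply: no_split; exists u, v.
have [wu [Bu Fu]] : exists wu, (forall t, t \in wu -> basis M t) /\ flatten wu = u.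
  apply: IH Mu; rewrite -ltnS (leq_trans _ w_size) // -uv size_cat -addn1 leq_add2l.
  by rewrite lt0n size_eq0; apply/eqP.
have [wv [Bv Fv]] : exists wv, (forall t, t \in wv -> basis M t) /\ flatten wv = v.
  apply: IH Mv; rewrite -ltnS (leq_trans _ w_size) // -uv size_cat -add1n leq_add2r.
  by rewrite lt0n size_eq0; apply/eqP.
exists (wu ++ wv); split; last by rewrite flatten_cat Fu Fv.
by move=> t /[!mem_cat] /orP [/Bu|/Bv].
Qed.

Lemma flatten_basis_nil M ws :
  (forall t, t \in ws -> basis M t) -> flatten ws = [::] -> ws = [::].
Proof.
case: ws => //= t ws Bws; have [_ [t_ne _]] := Bws t (mem_head _ _).
by case: t t_ne {Bws}.
Qed.

(* A stable submonoid is free: two factorisations over irreducibles share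
   their first factor, by stability applied to the shorter one. *)
Lemma stable_free M : submonoid M -> stable M -> free_submonoid M.
Proof.
move=> sM stM; split=> // ws1; elim: ws1 => [|x ws1 IH] ws2 B1 B2 /=.
  by move/esym/(flatten_basis_nil B2).
case: ws2 B2 => [|y ws2] B2 /=; first by move/(flatten_basis_nil B1).
have [Mx [x_ne x_irr]] := B1 x (mem_head _ _).
have [My [y_ne y_irr]] := B2 y (mem_head _ _).
have tail_M ws z : (forall t, t \in z :: ws -> basis M t) -> M (flatten ws).
  move=> Bws; apply: submonoid_flatten => // t t_ws.
  by have [] := Bws t; rewrite // inE t_ws orbT.
have M_ws1 := tail_M _ _ B1; have M_ws2 := tail_M _ _ B2.
move=> E; have exy : x = y.
  case: (cat_split E) => [[t [ey et]]|[t [ex et]]].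
  - have Mt : M t by apply: (stM x t (flatten ws2)); rewrite -?ey -?et.
    by rewrite ey; case: (y_irr x t Mx Mt (esym ey)) => [/x_ne|->] //; rewrite cats0.
  - have Mt : M t by apply: (stM y t (flatten ws1)); rewrite -?ex -?et.
    by rewrite ex; case: (x_irr y t My Mt (esym ex)) => [/y_ne|->] //; rewrite cats0.
subst y; congr (_ :: _); apply: IH (cat_cancel_l E).
- by move=> t t_ws; apply: B1; rewrite inE t_ws orbT.
- by move=> t t_ws; apply: B2; rewrite inE t_ws orbT.
Qed.

Lemma prefix_factorisation M A B C D : (forall t, t \in A ++ B -> basis M t) ->
  A ++ B = C ++ D -> size (flatten A) <= size (flatten C) ->
  exists E, C = A ++ E.
Proof.
move=> BAB /cat_split [[t [-> _]]|[t [eA _]]]; first by exists t.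
subst A; rewrite flatten_cat size_cat -{2}(addn0 (size (flatten C))) leq_add2l leqn0.
move/nilP => t_flat; exists [::].
suff -> : t = [::] by rewrite !cats0.
apply: (flatten_basis_nil (M := M)) t_flat => z z_t.
by apply: BAB; rewrite !mem_cat z_t orbT.
Qed.

Lemma free_stable M : free_submonoid M -> stable M.
Proof.
move=> [sM uniq_fact] u v w Mu Muv Mw Mvw.
have [fu [Bu Fu]] := factor_exists sM Mu.
have [fuv [Buv Fuv]] := factor_exists sM Muv.
have [fw [Bw Fw]] := factor_exists sM Mw.
have [fvw [Bvw Fvw]] := factor_exists sM Mvw.
have B2 A B : (forall t, t \in A -> basis M t) -> (forall t, t \in B -> basis M t) ->
    forall t, t \in A ++ B -> basis M t.
  by move=> BA BB t /[!mem_cat] /orP [/BA|/BB].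
have E : fu ++ fvw = fuv ++ fw.
  apply: uniq_fact; [exact: B2 | exact: B2 |].
  by rewrite !flatten_cat Fu Fvw Fuv Fw catA.
have [E' eE] : exists E, fuv = fu ++ E.
  by apply: (prefix_factorisation (B2 _ _ Bu Bvw) E); rewrite Fu Fuv size_cat leq_addr.
have <- : flatten E' = v.
  by apply: (@cat_cancel_l _ u); rewrite -Fuv eE flatten_cat Fu.
apply: submonoid_flatten => // t t_E'; have [] // := Buv t.
by rewrite eE mem_cat t_E' orbT.
Qed.

End FreeSubmonoids.

Section FreeHull.
Variables (S : eqType) (Z : seq S -> Prop).
Local Notation H := (free_hull Z).

Lemma hull_submonoid : submonoid H.
Proof.
split=> [M [[M0 _] _] _ //|u v Hu Hv M fM ZM].
by have [[_ MC] _] := fM; apply: MC; [apply: Hu|apply: Hv].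
Qed.

Lemma hull_Z z : Z z -> H z.
Proof. by move=> Zz M _ /(_ z Zz). Qed.

(* Stability passes to intersections, so the free hull is itself free. *)
Lemma hull_free : free_submonoid H.
Proof.
apply: stable_free hull_submonoid _ => u v w Hu Huv Hw Hvw M fM ZM.
by apply: (free_stable fM (u := u) (w := w)); [apply: Hu|apply: Huv|apply: Hw|apply: Hvw].
Qed.

Lemma hull_stable : stable H.
Proof. exact: free_stable hull_free. Qed.

Lemma first_FB w b : is_first Z w b -> FB Z b.
Proof. by case=> ws []. Qed.

Lemma first_nonnil w b : is_first Z w b -> w <> [::].
Proof. by move=> [ws [[_ [b_ne _]] [_ <-]]]; case: b b_ne. Qed.

(* Unique factorisation makes first_Z a function. *)
Lemma first_uniq w b b' : is_first Z w b -> is_first Z w b' -> b = b'.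
Proof.
move=> [ws [Fb [Fws E]]] [ws' [Fb' [Fws' E']]].
suff [] : b :: ws = b' :: ws' by [].
apply: hull_free.2; last by rewrite E E'.
- by move=> t /[!inE] /orP [/eqP ->|/Fws].
- by move=> t /[!inE] /orP [/eqP ->|/Fws'].
Qed.

Lemma first_exists w : H w -> w <> [::] -> exists b, is_first Z w b.
Proof.
move=> Hw w_ne; have [[|b ws] [B F]] := factor_exists hull_submonoid Hw.
  by rewrite -F in w_ne.
exists b, ws; split; first exact/B/mem_head.
by split=> // t t_ws; apply: B; rewrite inE t_ws orbT.
Qed.

Lemma first_cat x y b : is_first Z x b -> H y -> is_first Z (x ++ y) b.
Proof.
move=> [ws [Fb [Fws E]]] Hy; have [wy [B F]] := factor_exists hull_submonoid Hy.
exists (ws ++ wy); split=> //; split; last by rewrite -E -F /= flatten_cat catA.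
by move=> t /[!mem_cat] /orP [/Fws|/B].
Qed.

Lemma first_cat_inv x y b : H x -> H y -> x <> [::] ->
  is_first Z (x ++ y) b -> is_first Z x b.
Proof.
move=> Hx Hy x_ne fxy; have [b' fx] := first_exists Hx x_ne.
by rewrite (first_uniq fxy (first_cat fx Hy)).
Qed.

Lemma first_self y : FB Z y -> is_first Z y y.
Proof. by move=> Fy; exists [::]; rewrite /= cats0. Qed.

(* Every element y of FB(Z) is first_Z of a word of Z: otherwise the words
   of the hull not starting with y would form a free submonoid containing Z
   but not y. *)
Lemma FB_first_of_generator y : FB Z y -> exists z, Z z /\ is_first Z z y.
Proof.
move=> Fy; apply: NNPP => y_not_first.
pose M w := H w /\ ~ is_first Z w y.
have sM : submonoid M.
  split=> [|u v [Hu nu] [Hv nv]]; first by split; [case: hull_submonoid|move/first_nonnil].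
  split; first exact: hull_submonoid.2.
  by case: (classic (u = [::])) => [-> //|u_ne] /(first_cat_inv Hu Hv u_ne).
have stM : stable M.
  move=> u v w [Hu _] [Huv _] [Hw _] [Hvw nvw]; split; first exact: (hull_stable Hu Huv Hw).
  case: (classic (v = [::])) => [-> /first_nonnil //|v_ne fv].
  exact/nvw/first_cat.
have ZM z : Z z -> M z.
  by move=> Zz; split; [exact: hull_Z|move=> fz; apply: y_not_first; exists z].
by have [_] := Fy.1 M (stable_free sM stM) ZM; apply; apply: first_self.
Qed.

Lemma FB_irreducible y ws : FB Z y ->
  (forall t, t \in ws -> H t /\ t <> [::]) -> flatten ws = y -> y \in ws.
Proof.
move=> [Hy [y_ne y_irr]]; case: ws => [_ /= e|t ws Hws /= e]; first by rewrite -e in y_ne.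
have [Ht t_ne] := Hws t (mem_head _ _).
have Hrest : H (flatten ws).
  apply: (submonoid_flatten hull_submonoid) => z z_ws.
  by have [] := Hws z; rewrite // inE z_ws orbT.
case: (y_irr t (flatten ws) Ht Hrest e) => // rest_nil.
suff ws_nil : ws = [::] by move: e; rewrite ws_nil /= cats0 => ->; rewrite mem_head.
case: ws Hws rest_nil {Hrest e} => // z ws Hws /=.
have [_ z_ne] : H z /\ z <> [::] by apply: Hws; rewrite !inE eqxx orbT.
by case: z z_ne {Hws}.
Qed.

Lemma hull_gen_of_basis G w : (forall y, FB Z y -> y \in G) -> H w -> gen G w.
Proof.
move=> FB_G Hw; have [ws [B F]] := factor_exists hull_submonoid Hw.
by exists ws; split=> //; apply/allP => t /B /FB_G.
Qed.

Lemma gen_hull G w : (forall t, t \in G -> H t) -> gen G w -> H w.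
Proof.
move=> G_H [ws [/allP ws_G <-]].
by apply: (submonoid_flatten hull_submonoid) => t /ws_G /G_H.
Qed.

End FreeHull.

Section MarkedMorphisms.
Variables (S A : eqType) (Z : seq S -> Prop).
Local Notation H := (free_hull Z).
Implicit Types (f : A -> seq S) (r : seq A).

Lemma hull_morph f r : (forall a, H (f a)) -> H (morph f r).
Proof.
move=> Hf; elim: r => [|a r IH]; first by case: (hull_submonoid Z).
exact: (hull_submonoid Z).2.
Qed.

Lemma first_morph f a r b : (forall a, H (f a)) ->
  is_first Z (f a) b -> is_first Z (morph f (a :: r)) b.
Proof. by move=> Hf fb; apply: first_cat fb (hull_morph r Hf). Qed.

Lemma first_of_equal_images (f1 f2 : A -> seq S) a1 a2 r1 r2 b1 b2 :
  (forall a, H (f1 a)) -> (forall a, H (f2 a)) ->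
  is_first Z (f1 a1) b1 -> is_first Z (f2 a2) b2 ->
  morph f1 (a1 :: r1) = morph f2 (a2 :: r2) -> b1 = b2.
Proof.
move=> Hf1 Hf2 fb1 fb2 E.
by apply: (first_uniq (first_morph r1 Hf1 fb1)); rewrite E; apply: first_morph.
Qed.

Lemma marked_firsts_injective f bf :
  marked Z f -> (forall a, is_first Z (f a) (bf a)) -> injective bf.
Proof.
move=> [_ f_marked] f_bf a1 a2 e; case: (eqVneq a1 a2) => // ne.
by case: (f_marked a1 a2 ne _ _ (f_bf a1) (f_bf a2)).
Qed.

Lemma marked_of_firsts f bf : (forall a, H (f a)) ->
  (forall a, is_first Z (f a) (bf a)) -> injective bf -> marked Z f.
Proof.
move=> Hf f_bf bf_inj; split=> // a1 a2 ne b1 b2 f1 f2 e.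
move: f2; rewrite -e => /(first_uniq (f_bf a2)) e2.
by move: ne; rewrite (bf_inj a1 a2) ?eqxx // (first_uniq (f_bf a1) f1).
Qed.

Lemma marked_inj f : marked Z f -> (forall a, f a <> [::]) -> injective (morph f).
Proof.
move=> f_marked f_ne; elim=> [|a r IH] [|a' r'] //.
- by move/esym/(morph_nil f_ne).
- by move/(morph_nil f_ne).
move=> E; case: (eqVneq a a') => [ea|ne].
  by subst a'; congr (_ :: _); apply: IH; exact: cat_cancel_l E.
have [b fb] := first_exists (f_marked.1 a) (f_ne a).
have [b' fb'] := first_exists (f_marked.1 a') (f_ne a').
case: (f_marked.2 a a' ne _ _ fb fb').
exact: first_of_equal_images f_marked.1 f_marked.1 fb fb' E.
Qed.

Lemma marked_image_is_first f bf a a' : marked Z f ->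
  (forall a, is_first Z (f a) (bf a)) -> f a' = bf a -> a' = a.
Proof.
move=> f_marked f_bf e; apply: (marked_firsts_injective f_marked f_bf).
by apply: first_uniq (f_bf a') _; rewrite e; exact/first_self/first_FB/f_bf.
Qed.

(* A marked side f1 cannot be overtaken by f2 at a point (x, y) where two
   solutions branch: the overflow p would start with the first_Z's of two
   distinct letters of f1. *)
Lemma marked_no_overflow (f1 f2 : A -> seq S) x y x1 x2 y1 y2 p :
  marked Z f1 -> (forall a, f1 a <> [::]) -> (forall a, H (f2 a)) ->
  morph f2 y = morph f1 x ++ p -> p <> [::] ->
  morph f1 x ++ morph f1 x1 = morph f2 y ++ morph f2 y1 ->
  morph f1 x ++ morph f1 x2 = morph f2 y ++ morph f2 y2 ->
  branching x1 x2 -> False.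
Proof.
move=> f1_marked f1_ne Hf2 E0 p_ne.
rewrite E0 -!catA => /cat_cancel_l E1 /cat_cancel_l E2 D.
have Hf1 := f1_marked.1.
have Hp : H p.
  by apply: (hull_stable (u := morph f1 x) (w := morph f2 y1)); rewrite -?E0 -?E1;
    apply: hull_morph.
case: x1 x2 E1 E2 D => [|a t1] [|a' t2] /= E1 E2 D; try by move: p_ne; case: (p) E1 E2.
have ne : a != a' by apply/eqP => e; case: D => [/=|[]//]; rewrite e.
have [b fb] := first_exists Hp p_ne.
have [ba fa] := first_exists (Hf1 a) (f1_ne a).
have [ba' fa'] := first_exists (Hf1 a') (f1_ne a').
have first_p ap tp bp yp :
    is_first Z (f1 ap) bp -> morph f1 (ap :: tp) = p ++ morph f2 yp -> bp = b.
  move=> fp Ep; apply: (first_uniq (first_morph tp Hf1 fp)).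
  by rewrite Ep; apply: first_cat fb (hull_morph yp Hf2).
apply: (f1_marked.2 a a' ne ba ba' fa fa').
by rewrite (first_p _ _ _ _ fa E1) (first_p _ _ _ _ fa' E2).
Qed.

End MarkedMorphisms.

Section TwoMinimalSolutions.
Variables (S A : eqType) (Z : seq S -> Prop) (g h : A -> seq S).
Hypotheses (g_ne : forall a, g a <> [::]) (h_ne : forall a, h a <> [::]).
Hypotheses (g_marked : marked Z g) (h_hull : forall a, free_hull Z (h a)).

Lemma minimal_solution_no_shorter x x1 y y1 :
  minimal_solution g h (x ++ x1) (y ++ y1) -> x <> [::] -> y <> [::] ->
  morph g x = morph h y -> x1 = [::] /\ y1 = [::].
Proof.
move=> [[_ [_ E]] no_shorter] x_ne y_ne Exy.
have E1 : morph g x1 = morph h y1 by move: E; rewrite !morph_cat Exy => /cat_cancel_l.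
case: (classic (x1 = [::])) => [x1_nil|x1_ne].
  by split=> //; apply: (morph_nil h_ne); rewrite -E1 x1_nil.
case: (classic (y1 = [::])) => [y1_nil|y1_ne].
  by split=> //; apply: (morph_nil g_ne); rewrite E1 y1_nil.
have proper (T : eqType) (p q : seq T) : q <> [::] -> proper_prefix p (p ++ q).
  move=> q_ne; rewrite /proper_prefix prefix_prefix size_cat -{1}(addn0 (size p)).
  by rewrite ltn_add2l lt0n size_eq0; apply/eqP.
by case: no_shorter; exists x, y; split; [exact: proper|split; [exact: proper|]].
Qed.

Variables r s r' s' : seq A.
Hypotheses (rs_min : minimal_solution g h r s) (rs'_min : minimal_solution g h r' s').
Hypothesis rs_neq : (r, s) <> (r', s').
Local Notation u := (lcp r r').
Local Notation v := (lcp s s').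

(* Since g is injective, the two solutions differ on the h side. *)
Lemma right_sides_neq : s <> s'.
Proof.
move=> ess; apply: rs_neq; suff -> : r = r' by rewrite ess.
by apply: (marked_inj g_marked g_ne); rewrite rs_min.1.2.2 rs'_min.1.2.2 ess.
Qed.

Lemma branch_point : exists r1 r1' s1 s1',
  [/\ r = u ++ r1, r' = u ++ r1', s = v ++ s1, s' = v ++ s1'
    & branching r1 r1' /\ first s1 <> first s1'].
Proof.
have [r1 [r1' [er er' Br]]] := lcp_split r r'.
have [s1 [s1' [es es' [Bs|[s1_nil s1'_nil]]]]] := lcp_split s s'.
  by exists r1, r1', s1, s1'.
by exfalso; apply: right_sides_neq; rewrite [LHS]es [RHS]es' s1_nil s1'_nil.
Qed.

Lemma overflow_exists : exists o, morph g u = morph h v ++ o.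
Proof.
have [r1 [r1' [s1 [s1' [er er' es es' [Br _]]]]]] := branch_point.
have E1 : morph g u ++ morph g r1 = morph h v ++ morph h s1.
  by rewrite -!morph_cat -er -es; exact: rs_min.1.2.2.
have E2 : morph g u ++ morph g r1' = morph h v ++ morph h s1'.
  by rewrite -!morph_cat -er' -es'; exact: rs'_min.1.2.2.
case: (cat_split E1) => [[t [et _]]|[t [et _]]]; last by exists t.
case: (classic (t = [::])) => [t_nil|t_ne]; first by exists [::]; rewrite et t_nil !cats0.
by case: (marked_no_overflow g_marked g_ne h_hull et t_ne E1 E2 Br).
Qed.

(* The overflow is critical: the two branches continue it with distinct
   letters; when r = r' the solution (r, s) itself provides the branch. *)
Lemma overflow_critical o : morph g u = morph h v ++ o -> critical_overflow g h o u v.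
Proof.
move=> Eo; split=> //.
have [r1 [r1' [s1 [s1' [er er' es es' [Br Ds]]]]]] := branch_point.
have E1 : morph g (u ++ r1) = morph h (v ++ s1) by rewrite -er -es; exact: rs_min.1.2.2.
have E2 : morph g (u ++ r1') = morph h (v ++ s1') by rewrite -er' -es'; exact: rs'_min.1.2.2.
case: Br => [Dr|[r1_nil r1'_nil]]; first by exists r1, r1', s1, s1'.
rewrite r1_nil cats0 in E1; rewrite r1'_nil cats0 in er' E2.
have s1'_ne : s1' <> [::].
  move=> s1'_nil; apply: Ds; rewrite s1'_nil; move: E1.
  rewrite E2 s1'_nil cats0 morph_cat -{1}(cats0 (morph h v)).
  by move=> /cat_cancel_l /esym /(morph_nil h_ne) ->.
exists [::], r, s1, (s1' ++ s); split; first by case: (r) rs_min.1.1.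
split; first by case: (s1') s1'_ne Ds.
split; first by rewrite cats0.
rewrite catA -es' !morph_cat -rs_min.1.2.2 -rs'_min.1.2.2.
by congr (_ ++ _); rewrite -er'.
Qed.

(* A marked h cannot be overtaken either, so the overflow is empty. *)
Lemma marked_overflow_nil o : marked Z h -> morph g u = morph h v ++ o -> o = [::].
Proof.
move=> h_marked Eo; apply: NNPP => o_ne.
have [r1 [r1' [s1 [s1' [er er' es es' [Br Ds]]]]]] := branch_point.
have E1 : morph h v ++ morph h s1 = morph g u ++ morph g r1.
  by rewrite -!morph_cat -er -es; exact/esym/rs_min.1.2.2.
have E2 : morph h v ++ morph h s1' = morph g u ++ morph g r1'.
  by rewrite -!morph_cat -er' -es'; exact/esym/rs'_min.1.2.2.
by apply: (marked_no_overflow h_marked h_ne g_marked.1 Eo o_ne E1 E2); left.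
Qed.

(* With an empty overflow, minimality forces the branching at the start. *)
Lemma nil_overflow_lcp_nil : morph g u = morph h v -> u = [::].
Proof.
move=> Eo; apply: NNPP => u_ne; have v_ne : v <> [::].
  by move=> v_nil; apply: u_ne; apply: (morph_nil g_ne); rewrite Eo v_nil.
have [r1 [r1' [s1 [s1' [er er' es es' _]]]]] := branch_point.
have [_ s1_nil] : r1 = [::] /\ s1 = [::].
  by apply: minimal_solution_no_shorter u_ne v_ne Eo; rewrite -er -es.
have [_ s1'_nil] : r1' = [::] /\ s1' = [::].
  by apply: minimal_solution_no_shorter u_ne v_ne Eo; rewrite -er' -es'.
by apply: right_sides_neq; rewrite [LHS]es [RHS]es' s1_nil s1'_nil.
Qed.

Lemma nil_overflow_heads : morph g u = morph h v ->
  exists a a' b b' ta ta' tb tb', [/\ a != a',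
    morph g (a :: ta) = morph h (b :: tb) & morph g (a' :: ta') = morph h (b' :: tb')].
Proof.
move=> /nil_overflow_lcp_nil.
have [[r_ne [s_ne Ers]] _] := rs_min; have [[r'_ne [s'_ne Ers']] _] := rs'_min.
case: (r) r_ne Ers => [//|a ta] _; case: (r') r'_ne Ers' => [//|a' ta'] _.
case: (s) s_ne => [//|b tb] _; case: (s') s'_ne => [//|b' tb'] _ Ers' Ers u_nil.
by exists a, a', b, b', ta, ta', tb, tb'; split=> //; exact: lcp_nil_heads u_nil.
Qed.

End TwoMinimalSolutions.

Lemma codom_sub_eq (A : finType) (T : eqType) (f1 f2 : A -> T) :
  injective f1 -> {subset codom f1 <= codom f2} -> codom f1 =i codom f2.
Proof.
move=> f1_inj sub; apply: (uniq_min_size _ sub _).2; last by rewrite !size_codom.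
by rewrite codomE map_inj_uniq ?enum_uniq.
Qed.

(* If FB(Z) consists of the words bf a, and the generators of a k-maximal
   monoid lie in the free hull, then every bf a is one of these generators:
   the monoid generated by the bf a contains the k-maximal one. *)
Lemma maximal_contains_basis (S : eqType) (Z : seq S -> Prop) (A : finType)
    (f bf : A -> seq S) (k : nat) :
  (forall a, FB Z (bf a)) -> (forall y, FB Z y -> y \in codom bf) ->
  (forall a, free_hull Z (f a)) -> (forall a, f a <> [::]) ->
  #|A| <= k -> k_maximal k (gen (codom f)) -> forall a, bf a \in codom f.
Proof.
move=> bf_FB FB_bf f_hull f_ne card_A [_ f_max] a.
have f_in_bf w : gen (codom f) w -> gen (codom bf) w.
  move=> f_w; apply: hull_gen_of_basis FB_bf _.
  by apply: gen_hull f_w => _ /codomP [b ->].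
have [ws [/allP ws_f flat]] : gen (codom f) (bf a).
  apply: f_max f_in_bf _ _; first by rewrite size_codom.
  by exists [:: bf a]; rewrite /= codom_f cats0.
apply/ws_f/(FB_irreducible (bf_FB a) _ flat) => t /ws_f /codomP [b ->].
by split; [apply: f_hull|apply: f_ne].
Qed.

Lemma ord3_cover (b b' j x : 'I_3) :
  b != b' -> j != b -> j != b' -> [|| x == b, x == b' | x == j].
Proof.
by case: j => [[|[|[|?]]] ?] //; case: b => [[|[|[|?]]] ?] //;
  case: b' => [[|[|[|?]]] ?] //; case: x => [[|[|[|?]]] ?].
Qed.

Lemma pigeonhole3 (T : eqType) (f : 'I_3 -> T) (b b' : 'I_3) :
  f b != f b' -> ~ injective f -> forall j, f j = f b \/ f j = f b'.
Proof.
move=> fbb' f_ninj j; apply: NNPP => /not_or_and [/eqP fjb /eqP fjb'].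
have bb' : b != b' by apply: contraNneq fbb' => ->.
have jb : j != b by apply: contraNneq fjb => ->.
have jb' : j != b' by apply: contraNneq fjb' => ->.
apply: f_ninj => x y.
case/or3P: (ord3_cover x bb' jb jb') => /eqP ->;
  case/or3P: (ord3_cover y bb' jb jb') => /eqP -> // e;
  by move: fbb' fjb fjb'; rewrite e eqxx.
Qed.

Section ThreeLetters.
Variables (S : eqType) (Z : seq S -> Prop) (g h bg bh : 'I_3 -> seq S).
Hypothesis Z_sub : forall z, Z z -> z \in codom g \/ z \in codom h.
Hypotheses (g_marked : marked Z g) (h_hull : forall i, free_hull Z (h i)).
Hypotheses (bg_first : forall i, is_first Z (g i) (bg i))
  (bh_first : forall i, is_first Z (h i) (bh i)).

(* If h is not marked although two letters of h start like two distinct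
   letters a, a' of g, the first_Z's of h are among those of g, hence so is
   every element of FB(Z). *)
Lemma unmarked_FB_firsts a a' b b' : ~ marked Z h -> a != a' ->
  bh b = bg a -> bh b' = bg a' -> forall y, FB Z y -> y \in codom bg.
Proof.
move=> h_unmarked aa' ebh ebh'.
have bh_ninj : ~ injective bh by move/(marked_of_firsts h_hull bh_first).
have bg_inj := marked_firsts_injective g_marked bg_first.
have bh_bg j : bh j \in codom bg.
  have : bh b != bh b' by rewrite ebh ebh' (inj_eq bg_inj).
  by move/pigeonhole3/(_ bh_ninj j) => [->|->]; rewrite ?ebh ?ebh' codom_f.
move=> y /FB_first_of_generator [z [/Z_sub [] /codomP [i ->] fz]].
- by rewrite (first_uniq fz (bg_first i)) codom_f.
- by rewrite (first_uniq fz (bh_first i)).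
Qed.

(* If FB(Z) consists of first_Z's of g, 3-maximality of X^* and U^* puts them
   in X and U; markedness of g identifies them with X, so X = U. *)
Lemma FB_firsts_codom_eq : injective g ->
  (forall i, g i <> [::]) -> (forall i, h i <> [::]) ->
  k_maximal 3 (gen (codom g)) -> k_maximal 3 (gen (codom h)) ->
  (forall y, FB Z y -> y \in codom bg) -> codom g =i codom h.
Proof.
move=> g_inj g_ne h_ne g_max h_max FB_bg.
have bg_FB i : FB Z (bg i) := first_FB (bg_first i).
have card3 : #|'I_3| <= 3 by rewrite card_ord.
have bg_in_g := maximal_contains_basis bg_FB FB_bg g_marked.1 g_ne card3 g_max.
have bg_in_h := maximal_contains_basis bg_FB FB_bg h_hull h_ne card3 h_max.
apply: codom_sub_eq => // _ /codomP [i ->].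
have [i' ei'] := codomP (bg_in_g i).
suff <- : bg i = g i by exact: bg_in_h.
by rewrite ei' (marked_image_is_first g_marked bg_first (esym ei')).
Qed.

End ThreeLetters.

Lemma nil_overflow_marked (S : eqType) (Z : seq S -> Prop) (g h : 'I_3 -> seq S)
    a a' b b' ta ta' tb tb' :
  injective g -> (forall i, g i <> [::]) -> (forall i, h i <> [::]) ->
  ~ (codom g =i codom h) ->
  k_maximal 3 (gen (codom g)) -> k_maximal 3 (gen (codom h)) ->
  (forall z, Z z -> z \in codom g \/ z \in codom h) ->
  marked Z g -> (forall i, free_hull Z (h i)) -> a != a' ->
  morph g (a :: ta) = morph h (b :: tb) -> morph g (a' :: ta') = morph h (b' :: tb') ->
  marked Z h.
Proof.
move=> g_inj g_ne h_ne gh_neq g_max h_max Z_sub g_marked h_hull aa' Eb Eb'.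
have /fin_all_exists [bg bg_first] i : exists b, is_first Z (g i) b.
  exact: first_exists (g_marked.1 i) (g_ne i).
have /fin_all_exists [bh bh_first] i : exists b, is_first Z (h i) b.
  exact: first_exists (h_hull i) (h_ne i).
have ebh := first_of_equal_images g_marked.1 h_hull (bg_first a) (bh_first b) Eb.
have ebh' := first_of_equal_images g_marked.1 h_hull (bg_first a') (bh_first b') Eb'.
apply: NNPP => h_unmarked; apply: gh_neq.
apply: (FB_firsts_codom_eq g_marked h_hull bg_first) => //.
move=> y; exact: (unmarked_FB_firsts Z_sub g_marked h_hull bg_first bh_first
  h_unmarked aa' (esym ebh) (esym ebh')).
Qed.

Unset Implicit Arguments. Set Strict Implicit. Set Printing Implicit Defensive.

Theorem proposition4p5 (S : countType) (g h : 'I_3 -> seq S) :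
  injective g -> injective h ->
  (forall i, g i <> [::]) -> (forall i, h i <> [::]) ->
  ~ (codom g =i codom h) ->
  k_maximal 3 (gen (codom g)) ->
  k_maximal 3 (gen (codom h)) ->
  let Z := fun w : seq S => w \in codom g \/ w \in codom h in
  marked Z g ->
  forall r s r' s' : seq 'I_3,
    minimal_solution g h r s -> minimal_solution g h r' s' ->
    (r, s) <> (r', s') ->
    let u := lcp r r' in
    let v := lcp s s' in
    exists o : seq S,
      morph g u = morph h v ++ o /\
      critical_overflow g h o u v /\
      (marked Z h <-> o = [::]).
Proof.
move=> g_inj _ g_ne h_ne gh_neq g_max h_max Z g_marked r s r' s' min min' neq u v.
rewrite {}/u {}/v.
have h_hull i : free_hull Z (h i) by apply: hull_Z; right; exact: codom_f.
have [o Eo] := overflow_exists g_ne g_marked h_hull min min' neq.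
exists o; split=> //; split.
  exact (overflow_critical g_ne h_ne g_marked min min' neq Eo).
split=> [h_marked|o_nil].
  exact (marked_overflow_nil g_ne h_ne g_marked min min' neq h_marked Eo).
rewrite o_nil cats0 in Eo.
have [a [a' [b [b' [ta [ta' [tb [tb' [aa' Eb Eb']]]]]]]]] :=
  nil_overflow_heads g_ne h_ne g_marked min min' neq Eo.
by apply: (nil_overflow_marked g_inj g_ne h_ne gh_neq g_max h_max _ g_marked h_hull aa'
  Eb Eb').
Qed.
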